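(* For the $N$-relay 1-2-1 diamond network with relays operating in FD, the linear program $\mathrm{P1^d}$ (with $\mathsf C_p=\min\{\ell_{p,0},\ell_{N+1,p}\}$) has an optimal solution $(x_1,\dots,x_N)$ with at most $2$ indices $p$ such that $x_p>0$. Hence the FD approximate capacity $\mathsf{C}_{\rm cs,iid}$ is achieved by activating at most two relays, independently of $N$.
   Context: Diamond network: nodes $[0:N+1]$, source $0$, destination $N+1$, relays $[1:N]$; the only links are $(0,p)$ and $(p,N+1)$ for $p\in[1:N]$, with positive rational capacities $\ell_{p,0}$ and $\ell_{N+1,p}$. $\mathrm{P1^d}$ is the linear program $\max\sum_{p=1}^N x_p\mathsf C_p$ subject to $0\le x_p\le1$ for all $p\in[1:N]$, $\sum_{p=1}^N x_p\mathsf C_p/\ell_{p,0}\le1$, and $\sum_{p=1}^N x_p\mathsf C_p/\ell_{N+1,p}\le1$. In the FD case its optimal value equals $\mathsf{C}_{\rm cs,iid}$, the FD approximate capacity $\max_\lambda\min_\Omega\sum_{i\in\Omega,j\in\Omega^c}(\sum_{s:\,(i,j)\text{ active in }s}\lambda_s)\ell_{j,i}$ over probability vectors on FD beam states and cuts $0\in\Omega\subseteq[0:N]$. *)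

From HB Require Import structures.
From mathcomp Require Import all_boot all_order all_algebra.
Set Implicit Arguments. Unset Strict Implicit. Unset Printing Implicit Defensive.
Import Order.TTheory GRing.Theory Num.Theory.
Local Open Scope ring_scope.

(* Relays p in [1:N] are indexed by 'I_N.
   l0 p  = ell_{p,0}   (capacity of link source -> relay p)
   l1 p  = ell_{N+1,p} (capacity of link relay p -> destination) *)

Definition Cp (N : nat) (l0 l1 : 'I_N -> rat) (p : 'I_N) : rat :=
  Num.min (l0 p) (l1 p).

Definition P1d_obj (N : nat) (l0 l1 : 'I_N -> rat) (x : 'I_N -> rat) : rat :=
  \sum_(p < N) x p * Cp l0 l1 p.

Definition P1d_feasible (N : nat) (l0 l1 : 'I_N -> rat) (x : 'I_N -> rat) : Prop :=
  [/\ forall p : 'I_N, 0 <= x p <= 1,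
      \sum_(p < N) x p * Cp l0 l1 p / l0 p <= 1
    & \sum_(p < N) x p * Cp l0 l1 p / l1 p <= 1].

Definition P1d_optimal (N : nat) (l0 l1 : 'I_N -> rat) (x : 'I_N -> rat) : Prop :=
  P1d_feasible l0 l1 x /\
  forall y : 'I_N -> rat, P1d_feasible l0 l1 y -> P1d_obj l0 l1 y <= P1d_obj l0 l1 x.

From HB Require Import structures.
From mathcomp Require Import all_boot all_order all_algebra.
From mathcomp Require Import ring lra.
Set Implicit Arguments. Unset Strict Implicit. Unset Printing Implicit Defensive.
Import Order.TTheory GRing.Theory Num.Theory.
Local Open Scope ring_scope.

(* Only the rescaled flows [w_p = x_p C_p] matter. For a feasible point of
   value [Y > 0], the two cut constraints say that the [w]-weighted means of
   the points [(Y / ell_{p,0} - 1, Y / ell_{N+1,p} - 1)] lie in the closed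
   negative quadrant. In the plane this is already witnessed by one point or by a
   segment between two points, i.e. by one relay that alone carries [Y], or
   by a relay limited by its incoming link paired with one limited by its
   outgoing link; for such a pair, time-sharing with both cut constraints
   tight carries at least [Y]. Finitely many one- and two-relay schedules
   thus dominate every feasible point, and the best of them is optimal. *)

Section PlanarCone.
Variables (R : realFieldType) (I : finType) (a b : I -> R).

Lemma separating_slope :
  (forall r, 0 < a r \/ 0 < b r) ->
  (forall p q, 0 < a p -> b p <= 0 -> 0 < b q -> a q <= 0 ->
     a q * b p < a p * b q) ->
  exists2 k, 0 <= k & forall r, 0 < k * a r + b r.
Proof.
move=> pos_point cross.
(* Any slope strictly between [K] and [L] separates all points from the
   closed negative quadrant; [cross] gives [K < L]. *)
pose K := \big[Num.max/0]_(p | (0 < a p) && (b p <= 0)) (- b p / a p).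
pose L := \big[Num.min/(K + 2)]_(q | a q < 0) (b q / - a q).
have K_ge0 : 0 <= K.
  by rewrite /K; elim/big_rec: _ => // i x _ hx; rewrite le_max hx orbT.
have K_lt_L : K < L.
  apply: lt_bigmin => [|q aq_lt0]; first lra.
  have bq_gt0 : 0 < b q by case: (pos_point q) => //; lra.
  apply: bigmax_lt => [|p /andP[ap_gt0 bp_le0]]; first by apply: divr_gt0; lra.
  have := cross p q ap_gt0 bp_le0 bq_gt0 (ltW aq_lt0).
  have naq_gt0 : 0 < - a q by lra.
  by rewrite ltr_pdivrMr // mulrAC ltr_pdivlMr //; lra.
exists ((K + L) / 2) => [|r]; first by apply: divr_ge0; lra.
case: (ltgtP 0 (a r)) => ar.
- case: (ltP 0 (b r)) => br.
    by apply: ltr_wpDl => //; apply: mulr_ge0; [apply: divr_ge0; lra | exact: ltW].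
  have : - b r / a r <= K by apply: le_bigmax_cond; rewrite ar br.
  rewrite ler_pdivrMr // => h.
  have : K * a r < (K + L) / 2 * a r by rewrite ltr_pM2r //; lra.
  lra.
- have br : 0 < b r by case: (pos_point r) => //; lra.
  have : L <= b r / - a r by apply: bigmin_le_cond.
  have nar_gt0 : 0 < - a r by lra.
  rewrite ler_pdivlMr // => h.
  have : (K + L) / 2 * - a r < L * - a r by rewrite ltr_pM2r //; lra.
  lra.
- by rewrite -ar mulr0 add0r; case: (pos_point r) => //; rewrite -ar ltxx.
Qed.

Lemma nonpos_mean_witness (w : I -> R) :
  (forall r, 0 <= w r) -> 0 < \sum_r w r ->
  \sum_r w r * a r <= 0 -> \sum_r w r * b r <= 0 ->
  (exists r, a r <= 0 /\ b r <= 0) \/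
  (exists p q,
     [/\ 0 < a p, b p <= 0, 0 < b q, a q <= 0 & a p * b q <= a q * b p]).
Proof.
move=> w_ge0 sum_w_gt0 mean_a mean_b.
case: (pickP (fun r => (a r <= 0) && (b r <= 0))) => [r /andP[ar br]|no_point].
  by left; exists r.
pose crossing pq := [&& 0 < a pq.1, b pq.1 <= 0, 0 < b pq.2, a pq.2 <= 0
                      & a pq.1 * b pq.2 <= a pq.2 * b pq.1].
case: (pickP crossing) => [[p q] /and5P[] | no_cross]; first by right; exists p, q.
have [k k_ge0 k_sep] : exists2 k, 0 <= k & forall r, 0 < k * a r + b r.
  apply: separating_slope => [r | p q ap bp bq aq].
    by move: (no_point r); case: (ltP 0 (a r)); case: (ltP 0 (b r)); auto.
  move: (no_cross (p, q)); rewrite /crossing /= ap bp bq aq /=.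
  by move=> /negbT; rewrite -ltNge.
have [r /andP[_ wr_gt0]] : exists r, xpredT r && (0 < w r).
  by apply: psumr_neq0P => //; apply/eqP; rewrite gt_eqF.
have : 0 < \sum_r w r * (k * a r + b r).
  rewrite (bigD1 r) //=; apply: ltr_wpDr; last exact: mulr_gt0.
  by apply: sumr_ge0 => i _; apply: mulr_ge0 => //; exact: ltW.
have -> : \sum_r w r * (k * a r + b r) = k * \sum_r w r * a r + \sum_r w r * b r.
  by rewrite mulr_sumr -big_split /=; apply: eq_bigr => i _; ring.
have : k * \sum_r w r * a r <= 0 by rewrite mulr_ge0_le0.
lra.
Qed.

End PlanarCone.

Section TightPair.
Variables (R : realFieldType) (A B C D : R).

(* Time fractions of a relay with link capacities [(A, B)], [A < B], and of
   one with [(C, D)], [D < C], making both cut constraints tight. *)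
Definition tight_xp : R := (C - D) * B / (C * B - A * D).
Definition tight_xq : R := (B - A) * C / (C * B - A * D).

Hypotheses (A_gt0 : 0 < A) (B_gt0 : 0 < B) (C_gt0 : 0 < C) (D_gt0 : 0 < D).
Hypotheses (A_lt_B : A < B) (D_lt_C : D < C).

Let det_gt0 : 0 < C * B - A * D.
Proof.
have -> : C * B - A * D = (C - D) * B + (B - A) * D by ring.
by rewrite addr_gt0 // mulr_gt0 // subr_gt0.
Qed.

Lemma tight_xp_01 : 0 <= tight_xp <= 1.
Proof.
apply/andP; split.
  by apply: divr_ge0 (ltW det_gt0); rewrite mulr_ge0 ?subr_ge0 ?ltW.
rewrite ler_pdivrMr // mul1r mulrBl lerD2l lerN2 [A * D]mulrC (ler_pM2l D_gt0).
exact: ltW.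
Qed.

Lemma tight_xq_01 : 0 <= tight_xq <= 1.
Proof.
apply/andP; split.
  by apply: divr_ge0 (ltW det_gt0); rewrite mulr_ge0 ?subr_ge0 ?ltW.
rewrite ler_pdivrMr // mul1r mulrBl [B * C]mulrC lerD2l lerN2 (ler_pM2l A_gt0).
exact: ltW.
Qed.

Lemma tight_cut0 : tight_xp + tight_xq * (D / C) = 1.
Proof. by rewrite /tight_xp /tight_xq; field; rewrite !gt_eqF. Qed.

Lemma tight_cut1 : tight_xp * (A / B) + tight_xq = 1.
Proof. by rewrite /tight_xp /tight_xq; field; rewrite !gt_eqF. Qed.

Lemma tight_value_ge (Y : R) : 0 < Y ->
  (Y / A - 1) * (Y / D - 1) <= (Y / C - 1) * (Y / B - 1) ->
  Y <= tight_xp * A + tight_xq * D.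
Proof.
move=> Y_gt0 cross.
have cleared : (Y - A) * (Y - D) * (C * B) <= (Y - C) * (Y - B) * (A * D).
  have ABCD_gt0 : 0 < A * D * C * B by rewrite !mulr_gt0.
  move: cross; rewrite -(ler_pM2r ABCD_gt0).
  by congr (_ <= _); field; rewrite !gt_eqF.
have -> : tight_xp * A + tight_xq * D
          = (A * B * (C - D) + C * D * (B - A)) / (C * B - A * D).
  by rewrite /tight_xp /tight_xq; field; rewrite gt_eqF.
rewrite ler_pdivlMr // -(ler_pM2r Y_gt0); nra.
Qed.

End TightPair.

Lemma sum_two_point (R : pzSemiRingType) (I : finType) (p q : I) (s t : R)
    (F : I -> R) :
  \sum_i (s *+ (i == p) + t *+ (i == q)) * F i = s * F p + t * F q.
Proof.
have delta j (c : R) : \sum_i c *+ (i == j) * F i = c * F j.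
  by rewrite (bigD1 j) //= eqxx mulr1n big1 ?addr0 // => i /negPf->; rewrite mul0r.
by rewrite -!delta -big_split; apply: eq_bigr => i _; rewrite mulrDl.
Qed.

Lemma divr_sub1_le0 (R : numFieldType) (x l : R) :
  0 < l -> (x / l - 1 <= 0) = (x <= l).
Proof. by move=> l_gt0; rewrite subr_le0 ler_pdivrMr // mul1r. Qed.

Lemma divr_sub1_gt0 (R : numFieldType) (x l : R) :
  0 < l -> (0 < x / l - 1) = (l < x).
Proof. by move=> l_gt0; rewrite subr_gt0 ltr_pdivlMr // mul1r. Qed.

Section DiamondNetwork.
Variables (N : nat) (l0 l1 : 'I_N -> rat).
Hypotheses (l0_gt0 : forall p, 0 < l0 p) (l1_gt0 : forall p, 0 < l1 p).

Local Notation C := (Cp l0 l1).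

Lemma Cp_gt0 p : 0 < C p.
Proof. by rewrite lt_min l0_gt0 l1_gt0. Qed.

Definition two_relay (p q : 'I_N) (s t : rat) : 'I_N -> rat :=
  fun r => s *+ (r == p) + t *+ (r == q).

Lemma two_relay_support p q s t :
  (#|[set r | (0 < two_relay p q s t r)%R]| <= 2)%N.
Proof.
apply: leq_trans (subset_leq_card (_ : _ \subset [set p; q])) _.
  apply/subsetP => r; rewrite !inE /two_relay.
  by case: (r == p); case: (r == q); rewrite ?addr0 ?ltxx.
by rewrite cards2; case: (p != q).
Qed.

Lemma cut_two_relay p q s t (l : 'I_N -> rat) :
  \sum_r two_relay p q s t r * C r / l r = s * (C p / l p) + t * (C q / l q).
Proof. by under eq_bigr do rewrite -mulrA; apply: sum_two_point. Qed.

(* [p] is limited by its incoming and [q] by its outgoing link. *)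
Definition opposed (p q : 'I_N) : bool := (l0 p < l1 p) && (l1 q < l0 q).

Lemma opposed_neq p q : opposed p q -> p != q.
Proof.
case/andP=> lt_p lt_q; apply/eqP=> eq_pq.
by move: lt_q; rewrite -eq_pq ltNge (ltW lt_p).
Qed.

Lemma Cp_opposed p q : opposed p q -> C p = l0 p /\ C q = l1 q.
Proof. by case/andP=> lt_p lt_q; rewrite /Cp min_l ?min_r // ltW. Qed.

(* [None] indexes the zero schedule, so that the index type is never empty. *)
Definition schedule (pq : option ('I_N * 'I_N)) : 'I_N -> rat :=
  if pq is Some (p, q) then
    if opposed p q then
      two_relay p q (tight_xp (l0 p) (l1 p) (l0 q) (l1 q))
                    (tight_xq (l0 p) (l1 p) (l0 q) (l1 q))
    else two_relay p q 1 0
  else fun _ => 0.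

Lemma schedule_support pq : (#|[set r | (0 < schedule pq r)%R]| <= 2)%N.
Proof.
case: pq => [[p q]|]; last first.
  by rewrite (_ : [set _ | _] = set0) ?cards0 //; apply/setP => r; rewrite !inE ltxx.
by rewrite /schedule; case: ifP => _; apply: two_relay_support.
Qed.

Lemma schedule_feasible pq : P1d_feasible l0 l1 (schedule pq).
Proof.
case: pq => [[p q]|]; last first.
  by split=> [r||]; rewrite ?big1 ?lexx ?ler01 // => r _; rewrite !mul0r.
rewrite /schedule /P1d_feasible; case: ifP => [opp|_]; rewrite !cut_two_relay.
- have [-> ->] := Cp_opposed opp; have /negPf p_neq_q := opposed_neq opp.
  case/andP: opp => lt_p lt_q.
  rewrite !divff ?gt_eqF // !mulr1 tight_cut0 ?tight_cut1 //; split=> // r.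
  rewrite /two_relay; case: (eqVneq r p) => [->|_].
    by rewrite p_neq_q addr0 tight_xp_01.
  by case: (r == q); rewrite ?add0r ?addr0 ?tight_xq_01 ?lexx ?ler01.
- have Cp_div_le1 l : C p <= l p -> C p / l p <= 1.
    by move=> le_l; rewrite ler_pdivrMr ?mul1r // (lt_le_trans (Cp_gt0 p)).
  rewrite !mul1r !mul0r !addr0 !Cp_div_le1 ?ge_min ?lexx ?orbT //; split=> // r.
  by rewrite /two_relay mul0rn addr0; case: (r == p); rewrite ?lexx ?ler01.
Qed.

Lemma obj_schedule_opposed p q : opposed p q ->
  P1d_obj l0 l1 (schedule (Some (p, q)))
  = tight_xp (l0 p) (l1 p) (l0 q) (l1 q) * l0 p
    + tight_xq (l0 p) (l1 p) (l0 q) (l1 q) * l1 q.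
Proof.
move=> opp; have [Cp_p Cp_q] := Cp_opposed opp.
by rewrite /schedule opp /P1d_obj sum_two_point Cp_p Cp_q.
Qed.

Lemma obj_schedule_diag p : P1d_obj l0 l1 (schedule (Some (p, p))) = C p.
Proof.
have /negPf not_opp : ~~ opposed p p by apply/negP => /opposed_neq; rewrite eqxx.
by rewrite /schedule not_opp /P1d_obj sum_two_point mul1r mul0r addr0.
Qed.

Lemma feasible_dominated y : P1d_feasible l0 l1 y ->
  exists pq, P1d_obj l0 l1 y <= P1d_obj l0 l1 (schedule pq).
Proof.
case=> y_01 cut0 cut1; set Y := P1d_obj l0 l1 y.
have [Y_le0 | Y_gt0] := leP Y 0.
  by exists None; rewrite /P1d_obj big1 // => r _; rewrite mul0r.
pose w r := y r * C r.
have w_ge0 r : 0 <= w r.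
  by case/andP: (y_01 r) => y_ge0 _; exact: mulr_ge0 y_ge0 (ltW (Cp_gt0 r)).
have mean_le0 l : \sum_r y r * C r / l r <= 1 -> \sum_r w r * (Y / l r - 1) <= 0.
  move=> cut; have -> : \sum_r w r * (Y / l r - 1) = Y * \sum_r y r * C r / l r - Y.
    by rewrite mulr_sumr -sumrB; apply: eq_bigr => r _; rewrite /w; ring.
  by rewrite subr_le0 -[leRHS]mulr1 ler_pM2l.
have [[r []]|[p [q []]]] :=
  nonpos_mean_witness w_ge0 Y_gt0 (mean_le0 _ cut0) (mean_le0 _ cut1).
  rewrite !divr_sub1_le0 // => Y_le_l0 Y_le_l1.
  by exists (Some (r, r)); rewrite obj_schedule_diag le_min Y_le_l0.
rewrite !divr_sub1_le0 ?divr_sub1_gt0 // => lt_p le_p lt_q le_q cross.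
have opp : opposed p q by rewrite /opposed (lt_le_trans lt_p) // (lt_le_trans lt_q).
exists (Some (p, q)); rewrite obj_schedule_opposed //.
by case/andP: opp => *; apply: tight_value_ge.
Qed.

End DiamondNetwork.

Theorem lemma5 (N : nat) (l0 l1 : 'I_N -> rat)
  (hl0 : forall p, 0 < l0 p) (hl1 : forall p, 0 < l1 p) :
  exists x : 'I_N -> rat,
    P1d_optimal l0 l1 x /\ (#|[set p : 'I_N | (0 < x p)%R]| <= 2)%N.
Proof.
pose value pq := P1d_obj l0 l1 (schedule l0 l1 pq).
have [pq _ pq_max] := @arg_maxP _ _ _ None xpredT value isT.
exists (schedule l0 l1 pq); split; last exact: schedule_support.
split=> [|y /(feasible_dominated hl0 hl1) [pq' le_y]]; first exact: schedule_feasible.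
exact: le_trans le_y (pq_max pq' isT).
Qed.
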